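(* Let $(t_j^i)_{0\le j\le i}$ be real numbers and let $h_{j,k}^i$ ($0\le k\le i$, $0\le j\le i-k$) be defined by $h_{j,0}^i=t_j^i$ and $h_{j,k}^i=h_{j,k-1}^{i-1}+h_{j,k-1}^{i}+h_{j+1,k-1}^{i}$ for $k\ge 1$. Suppose there is a constant $c$ with $t_0^i=t_i^i=c$ for all $i\ge 0$, and that $t^i_{j}=t^{i-1}_{j-1}+t^{i-1}_{j}$ for all $i\ge 2$, $1\le j\le i-1$. Then $t_j^i=t_{i-j}^i$ for all $0\le j\le i$, and for fixed $j,k\ge 0$ the sequences $\{h_{j,k}^{i}\}_{i=j+k}^{\infty}$ and $\{h_{i-(j+k),k}^{i}\}_{i=j+k}^{\infty}$ are equal and both satisfy $\sum_{\ell=0}^{j+k+1}(-1)^{\ell}\binom{j+k+1}{\ell} h^{i+\ell}=0$ for all $i\ge j+k$, i.e., they are the same $(j+k+1)$-th order homogeneous linear recurrence sequence. *)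

From HB Require Import structures.
From mathcomp Require Import all_boot all_order all_algebra.
From mathcomp Require Import reals.
Set Implicit Arguments. Unset Strict Implicit. Unset Printing Implicit Defensive.
Import Order.TTheory GRing.Theory Num.Theory.
Local Open Scope ring_scope.

(* hseq t i j k  =  h^i_{j,k}, where t i j = t^i_j.
   h^i_{j,0} = t^i_j ;  h^i_{j,k} = h^{i-1}_{j,k-1} + h^i_{j,k-1} + h^i_{j+1,k-1}.
   Meaningful only for 0 <= k <= i, 0 <= j <= i - k (values outside are junk
   and never used in the statement). *)
Fixpoint hseq {R : realType} (t : nat -> nat -> R) (i j k : nat) : R :=
  match k with
  | 0 => t i j
  | k'.+1 => hseq t i.-1 j k' + hseq t i j k' + hseq t i j.+1 k'
  end.

From HB Require Import structures.
From mathcomp Require Import all_boot all_order all_algebra.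
From mathcomp Require Import reals.
From mathcomp Require Import zify.
Set Implicit Arguments. Unset Strict Implicit.
Import Order.TTheory GRing.Theory Num.Theory.
Local Open Scope ring_scope.

(* The edge and Pascal conditions force t^i_j = c C(i, j), which gives the
   symmetry of t, and the symmetry of h follows by induction on k.  The sum in
   the recurrence is the signed finite difference Delta^(j+k+1) in i.  Since
   C(i, j) is a polynomial of degree j in i, Delta^(j+1) kills h_{j,0}; and
   h_{j,k+1}^i = h_{j,k}^(i-1) + h_{j,k}^i + h_{j+1,k}^i, whose three summands
   are killed by Delta^(j+k+2) because a shift commutes with Delta and
   Delta^(n+1) = Delta^n - (shifted Delta^n). *)

Section FiniteDifference.
Variable R : pzRingType.
Implicit Types (f g : nat -> R) (n i : nat).

Definition fdiff n f i : R := \sum_(l < n.+1) (-1) ^+ l * 'C(n, l)%:R * f (i + l)%N.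

Lemma fdiff0 f i : fdiff 0 f i = f i.
Proof. by rewrite /fdiff big_ord1 /= bin0 addn0 expr0 !mul1r. Qed.

Lemma fdiffS n f i : fdiff n.+1 f i = fdiff n f i - fdiff n f i.+1.
Proof.
rewrite /fdiff big_ord_recl [in X in X - _]big_ord_recl /= !bin0 addn0 !expr0 !mul1r.
under eq_bigr => l _ do rewrite /bump /= add1n binS natrD mulrDr mulrDl.
rewrite big_split /= [X in _ + (X + _)]big_ord_recr /= bin_small // mulr0 mul0r addr0.
rewrite /bump /= addrA; congr (_ + _).
rewrite -sumrN; apply: eq_bigr => l _.
by rewrite exprS mulN1r !mulNr addSn addnS.
Qed.

Lemma eq_fdiff n f g i :
  (forall l, (l <= n)%N -> f (i + l)%N = g (i + l)%N) -> fdiff n f i = fdiff n g i.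
Proof. by move=> eq_fg; apply: eq_bigr => l _; rewrite eq_fg // -ltnS. Qed.

Lemma fdiffD n f g i : fdiff n (fun x => f x + g x) i = fdiff n f i + fdiff n g i.
Proof. by rewrite /fdiff -big_split; apply: eq_bigr => l _; rewrite mulrDr. Qed.

Lemma fdiff_shift n f i : fdiff n (fun x => f x.-1) i.+1 = fdiff n f i.
Proof. by apply: eq_bigr => l _; rewrite addSn. Qed.

Lemma fdiffS_eq0 n f m :
  (forall i, (m <= i)%N -> fdiff n f i = 0) ->
  forall i, (m <= i)%N -> fdiff n.+1 f i = 0.
Proof. by move=> fdiff_eq0 i le_mi; rewrite fdiffS !fdiff_eq0 ?subr0 // ltnW. Qed.

Lemma fdiff_binomial (c : R) j i : fdiff j.+1 (fun x => c *+ 'C(x, j)) i = 0.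
Proof.
elim: j i => [|j IHj] i; rewrite fdiffS; first by rewrite !fdiff0 !bin0 subrr.
have -> : fdiff j.+1 (fun x => c *+ 'C(x, j.+1)) i.+1 =
          fdiff j.+1 (fun x => c *+ 'C(x, j.+1) + c *+ 'C(x, j)) i.
  by apply: eq_bigr => l _; rewrite /= addSn binS mulrnDr.
by rewrite fdiffD IHj addr0 subrr.
Qed.

End FiniteDifference.

Section PascalTriangle.
Variables (V : zmodType) (t : nat -> nat -> V) (c : V).
Hypothesis t_edge0 : forall i, t i 0%N = c.
Hypothesis t_edge : forall i, t i i = c.
Hypothesis t_pascal : forall i j, (2 <= i)%N -> (1 <= j)%N -> (j <= i.-1)%N ->
  t i j = t i.-1 j.-1 + t i.-1 j.

Lemma pascal_binomial i j : (j <= i)%N -> t i j = c *+ 'C(i, j).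
Proof.
elim: i j => [|i IHi] [|j] le_ji //; rewrite ?t_edge0 ?bin0 //.
have [lt_ji | ->] : (j < i)%N \/ j = i by lia.
  rewrite t_pascal /= ?IHi ?(ltnW lt_ji) //; try lia.
  by rewrite binS mulrnDr addrC.
by rewrite t_edge binn.
Qed.

Lemma pascal_sym i j : (j <= i)%N -> t i j = t i (i - j).
Proof. by move=> le_ji; rewrite !pascal_binomial ?leq_subr // bin_sub. Qed.

End PascalTriangle.

Section HSequence.
Variables (R : realType) (t : nat -> nat -> R) (c : R).
Hypothesis t_edge0 : forall i, t i 0%N = c.
Hypothesis t_edge : forall i, t i i = c.
Hypothesis t_pascal : forall i j, (2 <= i)%N -> (1 <= j)%N -> (j <= i.-1)%N ->
  t i j = t i.-1 j.-1 + t i.-1 j.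

Lemma hseq_sym k j i : (j + k <= i)%N -> hseq t i j k = hseq t i (i - (j + k)) k.
Proof.
elim: k j i => [|k IHk] j i le_i.
  by rewrite /= addn0 (pascal_sym t_edge0 t_edge t_pascal) // -(addn0 j).
rewrite /=; set m := (i - (j + k.+1))%N.
have -> : hseq t i.-1 j k = hseq t i.-1 m k by rewrite IHk; [congr hseq | ]; lia.
have -> : hseq t i j k = hseq t i m.+1 k by rewrite IHk; [congr hseq | ]; lia.
have -> : hseq t i j.+1 k = hseq t i m k by rewrite IHk; [congr hseq | ]; lia.
by rewrite -!addrA [X in _ + X]addrC.
Qed.

Lemma fdiff_hseq k j i : (j + k <= i)%N -> fdiff (j + k).+1 (fun x => hseq t x j k) i = 0.
Proof.
elim: k j i => [|k IHk] j i le_i.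
  rewrite addn0 (eq_fdiff (g := fun x => c *+ 'C(x, j))) ?fdiff_binomial //.
  by move=> l _ /=; rewrite (pascal_binomial t_edge0 t_edge t_pascal) //; lia.
have IHk' := fdiffS_eq0 (IHk j).
rewrite addnS !fdiffD.
case: i le_i => [|i] le_i; first lia.
rewrite (fdiff_shift _ (fun x => hseq t x j k)) !IHk' ?(IHk j.+1) ?addr0 //; lia.
Qed.

End HSequence.

Theorem corollary8 (R : realType) (t : nat -> nat -> R) (c : R)
  (hedge0 : forall i : nat, t i 0%N = c)
  (hedgei : forall i : nat, t i i = c)
  (hrec : forall i j : nat, (2 <= i)%N -> (1 <= j)%N -> (j <= i.-1)%N ->
            t i j = t i.-1 j.-1 + t i.-1 j) :
  (forall i j : nat, (j <= i)%N -> t i j = t i (i - j)%N) /\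
  (forall j k : nat,
     (forall i : nat, (j + k <= i)%N -> hseq t i j k = hseq t i (i - (j + k))%N k) /\
     (forall i : nat, (j + k <= i)%N ->
        \sum_(l < (j + k).+2) (-1) ^+ l * ('C((j + k).+1, l))%:R * hseq t (i + l)%N j k = 0) /\
     (forall i : nat, (j + k <= i)%N ->
        \sum_(l < (j + k).+2) (-1) ^+ l * ('C((j + k).+1, l))%:R
            * hseq t (i + l)%N (i + l - (j + k))%N k = 0)).
Proof.
have h_sym := hseq_sym hedge0 hedgei hrec.
have h_rec := fdiff_hseq hedge0 hedgei hrec.
split; first exact: pascal_sym hedge0 hedgei hrec.
move=> j k; split; first exact: h_sym.
split; first exact: h_rec.
move=> i le_i; rewrite -[RHS](h_rec k j i le_i).
apply: (eq_fdiff (f := fun x => hseq t x (x - (j + k)) k)) => l _.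
by rewrite -h_sym //; lia.
Qed.
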